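(* Let $n\ge2$, let $\mathbf{q}\in\mathbb{R}^n$ with $\sum_i\mathbf{q}_i=1$ and $\mathbf{q}\neq\mathbf{1}/n$, let $q_{\min}=\min_i\mathbf{q}_i$, and let $t\ge1/n$. Define $$\bar{\mathbf{q}}=\frac{\mathbf{1}}{n}+\frac{1}{1-n\,q_{\min}}\Big(\mathbf{q}-\frac{\mathbf{1}}{n}\Big),\qquad \bar{\mathbf{p}}=\frac{\mathbf{1}}{n}+\sqrt{t-\tfrac1n}\,\frac{\mathbf{q}-\mathbf{1}/n}{\|\mathbf{q}-\mathbf{1}/n\|_2}.$$ If $\bar{\mathbf{q}}\cdot\bar{\mathbf{q}}\ge t$, then $\bar{\mathbf{p}}\ge0$ and $\bar{\mathbf{p}}$ maximizes $\mathbf{p}\cdot\mathbf{q}$ over $P(t)$.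
   Context: $\mathbf{1}\in\mathbb{R}^n$ is the all-ones vector. $P(t)=\{\mathbf{p}\in\mathbb{R}^n:\mathbf{p}\ge0,\ \sum_i\mathbf{p}_i=1,\ \mathbf{p}\cdot\mathbf{p}\le t\}$. Inequalities between vectors are componentwise. *)

From mathcomp Require Import all_boot all_order all_algebra.
From mathcomp Require Import reals.
Set Implicit Arguments. Unset Strict Implicit. Unset Printing Implicit Defensive.
Import Order.TTheory GRing.Theory Num.Theory.
Local Open Scope ring_scope.

Definition dot (R : realType) (n : nat) (p q : 'I_n -> R) : R :=
  \sum_(i < n) p i * q i.

Definition norm2 (R : realType) (n : nat) (v : 'I_n -> R) : R :=
  Num.sqrt (dot v v).

(* minimum entry of q (meaningful for n >= 1) *)
Definition vmin (R : realType) (n : nat) (q : 'I_n -> R) : R :=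
  let s := [seq q i | i <- enum 'I_n] in foldr Num.min (head 0 s) s.

Definition unif (R : realType) (n : nat) : 'I_n -> R := fun _ => (n%:R)^-1.

Definition Pt (R : realType) (n : nat) (t : R) (p : 'I_n -> R) : Prop :=
  (forall i, 0 <= p i) /\ \sum_(i < n) p i = 1 /\ dot p p <= t.

Definition qbar (R : realType) (n : nat) (q : 'I_n -> R) : 'I_n -> R :=
  fun i => (n%:R)^-1 + (1 - n%:R * vmin q)^-1 * (q i - (n%:R)^-1).

Definition pbar (R : realType) (n : nat) (t : R) (q : 'I_n -> R) : 'I_n -> R :=
  fun i => (n%:R)^-1 +
    Num.sqrt (t - (n%:R)^-1) * ((q i - (n%:R)^-1) / norm2 (fun j => q j - (n%:R)^-1)).

From mathcomp Require Import all_boot all_order all_algebra.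
From mathcomp Require Import boolp reals.
From mathcomp Require Import ring.
(* Everything happens on the line through the barycentre 1/n with direction
   d = q - 1/n.  Writing [dilate q k] for 1/n + k d, every such vector sums to 1
   and (dilate q k).(dilate q l) = 1/n + k l |d|^2.  Both qbar and pbar are of
   this form, so the hypothesis t <= qbar.qbar says that the ratio k of pbar
   satisfies k (1 - n q_min) <= 1, which is exactly what keeps the smallest
   entry of pbar nonnegative; k is chosen so that pbar.pbar = t.  Optimality is
   Cauchy-Schwarz: for p in P(t),
   p.q = 1/n + (p - 1/n).d <= 1/n + sqrt(t - 1/n) |d| = pbar.q. *)

Set Implicit Arguments.
Unset Strict Implicit.
Unset Printing Implicit Defensive.

Import Order.TTheory GRing.Theory Num.Theory.
Local Open Scope ring_scope.

Definition dilate (R : realType) (n : nat) (q : 'I_n -> R) (k : R) : 'I_n -> R :=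
  fun i => (n%:R)^-1 + k * (q i - (n%:R)^-1).

Section Simplex.

Variables (R : realType) (n : nat).
Implicit Types (p q r : 'I_n -> R) (k l t : R).

Local Notation center q := (fun i => q i - (n%:R)^-1).

Lemma dot_ge0 p : 0 <= dot p p.
Proof. by apply: sumr_ge0 => i _; rewrite -expr2 sqr_ge0. Qed.

Lemma dot_eq0 p : dot p p = 0 -> forall i, p i = 0.
Proof.
move=> p0 i; apply/eqP; rewrite -[_ == _]orbb -mulf_eq0; apply/eqP.
by apply: (psumr_eq0P _ p0) => // j _; rewrite -expr2 sqr_ge0.
Qed.

Lemma dot_norm2 p : dot p p = norm2 p ^+ 2.
Proof. by rewrite sqr_sqrtr // dot_ge0. Qed.

Lemma dot_CauchySchwarz p q : dot p q ^+ 2 <= dot p p * dot q q.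
Proof.
set a := dot p q; set P := dot p p; set Q := dot q q.
have [Q0 | Q_gt0] := eqVneq Q 0.
  rewrite Q0 mulr0 /a /dot big1 ?expr0n // => i _.
  by rewrite (dot_eq0 Q0) mulr0.
have {}Q_gt0 : 0 < Q by rewrite lt_def Q_gt0 dot_ge0.
have : 0 <= \sum_(i < n) (Q * p i - a * q i) ^+ 2 by apply: sumr_ge0 => i _; rewrite sqr_ge0.
rewrite (eq_bigr (fun i => Q ^+ 2 * (p i * p i) - 2 * Q * a * (p i * q i)
                           + a ^+ 2 * (q i * q i))) => [|i _]; last by ring.
rewrite big_split sumrB /= -!mulr_sumr -/(dot p p) -/(dot p q) -/(dot q q) -/a -/P -/Q.
have -> : Q ^+ 2 * P - 2 * Q * a * a + a ^+ 2 * Q = Q * (P * Q - a ^+ 2) by ring.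
by rewrite pmulr_rge0 // subr_ge0.
Qed.

Lemma dot_le_norm2 p q : dot p q <= norm2 p * norm2 q.
Proof.
have [a_le0 | a_gt0] := lerP (dot p q) 0.
  by apply: le_trans a_le0 _; rewrite mulr_ge0 ?sqrtr_ge0.
rewrite /norm2 -sqrtrM ?dot_ge0 // -ler_sqr ?nnegrE ?sqrtr_ge0 ?(ltW a_gt0) //.
by rewrite sqr_sqrtr ?mulr_ge0 ?dot_ge0 // dot_CauchySchwarz.
Qed.

Lemma vmin_le q i : vmin q <= q i.
Proof. by rewrite /vmin foldrE big_map ge_bigmin_seq // mem_enum. Qed.

Lemma norm2_center_gt0 q : q <> @unif R n -> 0 < norm2 (center q).
Proof.
move=> q_nu; rewrite sqrtr_gt0 lt_def dot_ge0 andbT; apply/eqP => /dot_eq0 q_u.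
by apply: q_nu; apply: funext => i; apply/eqP; rewrite -subr_eq0 q_u.
Qed.

Lemma center_dilate q k i : dilate q k i - (n%:R)^-1 = k * (q i - (n%:R)^-1).
Proof. by rewrite /dilate addrAC subrr add0r. Qed.

Lemma dilate1 q : dilate q 1 = q.
Proof. by apply: funext => i; rewrite /dilate mul1r addrC subrK. Qed.

Lemma qbar_dilate q : qbar q = dilate q (1 - n%:R * vmin q)^-1.
Proof. by []. Qed.

Lemma pbar_dilate t q :
  pbar t q = dilate q (Num.sqrt (t - (n%:R)^-1) / norm2 (center q)).
Proof. by apply: funext => i; rewrite /pbar /dilate mulrA mulrAC. Qed.

Hypothesis n_gt0 : (0 < n)%N.

Lemma mulrn_invn : (n%:R)^-1 *+ n = 1 :> R.
Proof. by rewrite -[LHS]mulr_natr mulVf // pnatr_eq0 -lt0n. Qed.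

Lemma sum_center q : \sum_(i < n) q i = 1 -> \sum_(i < n) (q i - (n%:R)^-1) = 0.
Proof. by move=> q1; rewrite sumrB q1 sumr_const card_ord mulrn_invn subrr. Qed.

Lemma dot_center p r : \sum_(i < n) p i = 1 -> \sum_(i < n) r i = 1 ->
  dot p r = (n%:R)^-1 + dot (center p) (center r).
Proof.
move=> p1 r1; set u := (n%:R)^-1 : R.
rewrite /dot (eq_bigr (fun i => (p i - u) * (r i - u)
  + (u * (r i - u) + (u * (p i - u) + u * u)))) => [|i _]; last by ring.
rewrite !big_split /= -!mulr_sumr !sum_center // !mulr0 !add0r sumr_const card_ord.
by rewrite mulrn_invn mulr1 addrC.
Qed.

Lemma vmin_lt_invn q : \sum_(i < n) q i = 1 -> q <> @unif R n -> vmin q < (n%:R)^-1.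
Proof.
move=> q1 q_nu; rewrite ltNge; apply/negP => u_le_min; apply: q_nu.
apply: funext => i; apply/eqP; rewrite -subr_eq0; apply/eqP.
have center_ge0 j : 0 <= q j - (n%:R)^-1 by rewrite subr_ge0 (le_trans u_le_min) ?vmin_le.
exact: (psumr_eq0P (fun j _ => center_ge0 j) (sum_center q1)).
Qed.

Lemma sum_dilate q k : \sum_(i < n) q i = 1 -> \sum_(i < n) dilate q k i = 1.
Proof.
move=> q1; rewrite big_split /= -mulr_sumr sum_center // mulr0 addr0.
by rewrite sumr_const card_ord mulrn_invn.
Qed.

Lemma dot_dilate q k l : \sum_(i < n) q i = 1 ->
  dot (dilate q k) (dilate q l) = (n%:R)^-1 + k * l * norm2 (center q) ^+ 2.
Proof.
move=> q1; rewrite dot_center ?sum_dilate // -dot_norm2 /dot mulr_sumr.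
by congr (_ + _); apply: eq_bigr => i _ /=; rewrite !center_dilate; ring.
Qed.

Lemma dilate_ge0 q k i :
  0 <= k -> k * (1 - n%:R * vmin q) <= 1 -> 0 <= dilate q k i.
Proof.
move=> k_ge0 kc_le1; set m := vmin q.
have -> : dilate q k i = (n%:R)^-1 * (1 - k * (1 - n%:R * m)) + k * (q i - m).
  by rewrite /dilate; field; rewrite pnatr_eq0 -lt0n.
by rewrite addr_ge0 ?mulr_ge0 ?invr_ge0 ?ler0n ?subr_ge0 ?vmin_le.
Qed.

End Simplex.

Section Pbar.

Variables (R : realType) (n : nat) (t : R) (q : 'I_n -> R).
Hypotheses (n_gt0 : (0 < n)%N) (q1 : \sum_(i < n) q i = 1).

Local Notation u := ((n%:R)^-1 : R).
Local Notation N := (norm2 (fun i => q i - (n%:R)^-1)).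

Lemma sum_pbar : \sum_(i < n) pbar t q i = 1.
Proof. by rewrite pbar_dilate sum_dilate. Qed.

Lemma dot_pbar : q <> @unif R n -> u <= t -> dot (pbar t q) (pbar t q) = t.
Proof.
move=> q_nu u_le_t; rewrite pbar_dilate dot_dilate //.
rewrite mulrACA -expr2 divfK ?sqr_sqrtr ?subr_ge0 1?addrC ?subrK //.
by rewrite gt_eqF // norm2_center_gt0.
Qed.

Lemma pbar_ge0 i : q <> @unif R n -> u <= t -> t <= dot (qbar q) (qbar q) ->
  0 <= pbar t q i.
Proof.
move=> q_nu u_le_t t_le_qbar; set c := 1 - n%:R * vmin q.
have N_gt0 : 0 < N by apply: norm2_center_gt0.
have c_gt0 : 0 < c.
  rewrite subr_gt0 -ltr_pdivlMl ?ltr0n // mulr1; exact: vmin_lt_invn.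
rewrite pbar_dilate; apply: dilate_ge0 => //; first by rewrite divr_ge0 ?sqrtr_ge0 ?(ltW N_gt0).
rewrite mulrAC ler_pdivrMr // mul1r -ler_pdivlMr //.
rewrite -ler_sqr ?nnegrE ?sqrtr_ge0 ?divr_ge0 ?(ltW N_gt0) ?(ltW c_gt0) //.
rewrite sqr_sqrtr ?subr_ge0 // lerBlDl.
rewrite qbar_dilate dot_dilate // -/c in t_le_qbar.
suff -> : (N / c) ^+ 2 = c^-1 / c * N ^+ 2 by [].
by ring.
Qed.

Lemma dot_le_pbar p : \sum_(i < n) p i = 1 -> dot p p <= t -> dot p q <= dot (pbar t q) q.
Proof.
move=> p1 p_le_t; set s := Num.sqrt (t - u).
have norm2_center_p_le : norm2 (fun i => p i - u) <= s.
  by rewrite ler_wsqrtr // lerBrDl -dot_center.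
have -> : dot (pbar t q) q = dot (dilate q (s / N)) (dilate q 1).
  by rewrite pbar_dilate dilate1.
rewrite dot_center // dot_dilate // lerD2l.
have -> : s / N * 1 * N ^+ 2 = s * N.
  have [-> | N_neq0] := eqVneq N 0; first by rewrite expr0n !mulr0.
  by rewrite mulr1 expr2 mulrA divfK.
by apply: le_trans (dot_le_norm2 _ _) _; rewrite ler_wpM2r ?sqrtr_ge0.
Qed.

End Pbar.

Theorem mainTheorem9 (R : realType) (n : nat) (q : 'I_n -> R) (t : R) :
  (2 <= n)%N ->
  \sum_(i < n) q i = 1 ->
  q <> @unif R n ->
  (n%:R)^-1 <= t ->
  t <= dot (qbar q) (qbar q) ->
  (forall i, 0 <= pbar t q i) /\
  Pt t (pbar t q) /\
  (forall p : 'I_n -> R, Pt t p -> dot p q <= dot (pbar t q) q).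
Proof.
move=> n_ge2 q1 q_nu u_le_t t_le_qbar.
have n_gt0 : (0 < n)%N by apply: ltnW.
have pbar_nneg i : 0 <= pbar t q i by apply: pbar_ge0.
split=> //; split; first by split=> //; rewrite sum_pbar // dot_pbar.
by move=> p [_ [p1 p_le_t]]; apply: dot_le_pbar.
Qed.
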